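(* Let $G$ be a directed graph on $V=\{v_1,\dots,v_n\}$ with edge set $E$. Let $\mathbb F$ be a field and $k\ge1$. Let $\chi:V\to\mathbb F^k$ be any map, and let $y_{ij}\in\mathbb F$ be scalars for all ordered pairs $(i,j)$. Let $E^+$ be a finite set of ordered pairs not in $E$ (inserted edges), and let $E^-\subseteq E$ (deleted edges). Let $G'$ be the directed graph on $V$ with edge set $(E\setminus E^-)\cup E^+$. Define $Q$, $S$, $F$, $\mathcal Z$ for $G$, and $\mathcal Z_{\mathrm{new}}$ for $G'$, as in the context. Let $I\subseteq[n]$ be the set of indices $i$ such that $v_i$ is an endpoint of an edge in $E^+\cup E^-$. Let $Q'=(Q[i,j])_{i,j\in I}$, and let $S'=(S[i])_{i\in I}$, $F'=(F[i])_{i\in I}$ be column vectors. Define the $I\times I$ matrix $\Delta$ by $\Delta[i,j]=y_{ij}$ if $(v_i,v_j)\in E^+$, $\Delta[i,j]=-y_{ij}$ if $(v_i,v_j)\in E^-$, and $\Delta[i,j]=0$ otherwise. Then $$\mathcal Z_{\mathrm{new}}=\mathcal Z+\sum_{i=1}^{k}F'^{T}\,\Delta\,(Q'\Delta)^{i-1}\,S',$$ where all matrix and vector products are taken over the (noncommutative) ring $\Lambda(\mathbb F^k)$, multiplying entries in left-to-right order.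
   Context: $\Lambda(\mathbb F^k)$ is the exterior algebra over $\mathbb F^k$, with product $\wedge$. A vector $v\in\mathbb F^k$ is identified with $\sum_i v[i]e_i\in\Lambda(\mathbb F^k)$, and field scalars commute with everything. A walk in a directed graph $H$ is a sequence $w=(w_1,\dots,w_s)$, $s\ge1$, of vertices with $(w_r,w_{r+1})$ an edge of $H$ for all $r<s$. Vertices may repeat. Its walk extensor is $$\chi(w)=\chi(w_1)\wedge y_{w_1w_2}\chi(w_2)\wedge\cdots\wedge y_{w_{s-1}w_s}\chi(w_s),$$ where $y_{v_av_b}$ means $y_{ab}$. Any walk with more than $k$ vertices has $\chi(w)=0$. For $H=G$, $Q[i,j]$ is the sum of $\chi(w)$ over all walks in $G$ from $v_i$ to $v_j$ with at most $k$ vertices (equivalently, over all walks). Further, $S[i]=\sum_jQ[i,j]$, $F[j]=\sum_iQ[i,j]$ and $\mathcal Z=\sum_{i,j}Q[i,j]$. The quantity $\mathcal Z_{\mathrm{new}}$ is the sum of $\chi(w)$ over all walks $w$ in $G'$ with at most $k$ vertices. *)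

From HB Require Import structures.
From mathcomp Require Import all_boot all_order all_algebra.
Set Implicit Arguments. Unset Strict Implicit. Unset Printing Implicit Defensive.
Import Order.TTheory GRing.Theory Num.Theory.
Local Open Scope ring_scope.

(* Exterior algebra Lambda(F^k): coordinates w.r.t. the basis e_A, A a subset
   of {0..k-1}, where e_A = e_{a_1} /\ ... /\ e_{a_m}, a_1 < ... < a_m,
   and e_emptyset = 1.  Addition / scaling are pointwise. *)
Notation ext F k := {ffun {set 'I_k} -> F} (only parsing).

Section Ext.
Variables (F : fieldType) (k : nat).

(* e_A /\ e_B = ext_sign A B e_(A u B) when A, B disjoint, 0 otherwise *)
Definition ext_sign (A B : {set 'I_k}) : F :=
  (-1) ^+ #|[set p : 'I_k * 'I_k | [&& p.1 \in A, p.2 \in B & (p.2 < p.1)%N]]|.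

Definition wedge (x y : ext F k) : ext F k :=
  [ffun C => \sum_(A : {set 'I_k}) \sum_(B : {set 'I_k} |
      [disjoint A & B] && (A :|: B == C)) ext_sign A B * x A * y B].

Definition ext_scale (c : F) (x : ext F k) : ext F k := [ffun A => c * x A].

Definition ext1 : ext F k := [ffun A => (A == set0)%:R].

Definition vec_ext (v : 'rV[F]_k) : ext F k :=
  [ffun A => \sum_(i : 'I_k | A == [set i]) v 0 i].
End Ext.

Section Walks.
Variables (F : fieldType) (k n : nat).
Variables (chi : 'I_n -> 'rV[F]_k) (y : 'I_n -> 'I_n -> F).

Definition is_walk (E : {set 'I_n * 'I_n}) (w : seq 'I_n) : bool :=
  if w is x :: r then path (fun a b => (a, b) \in E) x r else false.

(* chi(w1) /\ y_{w1w2} chi(w2) /\ ... /\ y_{w(s-1)ws} chi(ws), left to right *)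
Fixpoint wext_aux (acc : ext F k) (prev : 'I_n) (r : seq 'I_n) : ext F k :=
  if r is v :: r' then
    wext_aux (wedge acc (ext_scale (y prev v) (vec_ext (chi v)))) v r'
  else acc.

Definition walk_extensor (w : seq 'I_n) : ext F k :=
  if w is x :: r then wext_aux (vec_ext (chi x)) x r else 0.

Definition walk_sum (E : {set 'I_n * 'I_n}) (P : seq 'I_n -> bool) : ext F k :=
  \sum_(l < k) \sum_(t : (l.+1).-tuple 'I_n | is_walk E t && P t)
     walk_extensor t.

Definition Qmat (E : {set 'I_n * 'I_n}) (i j : 'I_n) : ext F k :=
  walk_sum E (fun w => (head i w == i) && (last i w == j)).

Definition Svec E (i : 'I_n) : ext F k := \sum_(j : 'I_n) Qmat E i j.
Definition Fvec E (j : 'I_n) : ext F k := \sum_(i : 'I_n) Qmat E i j.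
Definition Ztot E : ext F k := \sum_(i : 'I_n) \sum_(j : 'I_n) Qmat E i j.
Definition Zall E : ext F k := walk_sum E (fun _ => true).

(* I x I matrices over Lambda(F^k) represented as functions, products
   computed with wedge in left-to-right order, indices summed over I *)
Definition mmul (I : {set 'I_n}) (A B : 'I_n -> 'I_n -> ext F k) :=
  fun i j => \sum_(l in I) wedge (A i l) (B l j).

Definition Delta (Ep Em : {set 'I_n * 'I_n}) (i j : 'I_n) : ext F k :=
  if (i, j) \in Ep then ext_scale (y i j) (ext1 F k)
  else if (i, j) \in Em then ext_scale (- y i j) (ext1 F k) else 0.

Definition endpoints (Ep Em : {set 'I_n * 'I_n}) : {set 'I_n} :=
  [set v | [exists u, ((v, u) \in Ep :|: Em) || ((u, v) \in Ep :|: Em)]].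

(* Delta (Q' Delta)^m *)
Definition DQpow (E Ep Em : {set 'I_n * 'I_n}) (m : nat) :=
  iter m (fun M => mmul (endpoints Ep Em) M
                        (mmul (endpoints Ep Em) (Qmat E) (Delta Ep Em)))
       (Delta Ep Em).

(* F'^T Delta (Q' Delta)^m S' *)
Definition correction_term (E Ep Em : {set 'I_n * 'I_n}) (m : nat) : ext F k :=
  \sum_(a in endpoints Ep Em) \sum_(b in endpoints Ep Em)
     wedge (wedge (Fvec E a) (DQpow E Ep Em m a b)) (Svec E b).
End Walks.

From HB Require Import structures.
From mathcomp Require Import all_boot all_order all_algebra.
From mathcomp Require Import ring zify.
Set Implicit Arguments. Unset Strict Implicit. Unset Printing Implicit Defensive.
Import Order.TTheory GRing.Theory Num.Theory.
Local Open Scope ring_scope.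

(* A product of more than k vectors vanishes in the exterior algebra, so walk
   sums become finite matrix power series over it.  With C = diag(chi(v_i)) and
   A_E = (y_ij [(v_i, v_j) \in E]), the walks with l + 1 vertices from v_i to v_j
   contribute ((C A_E)^l C)[i, j], hence Q_E = sum_(l < k) (C A_E)^l C =
   (1 - C A_E)^-1 C, the geometric series being exact because C A_E is
   nilpotent.  As A_E' = A_E + Delta, the resolvent identity gives
   Q_E' = Q_E + Q_E' Delta Q_E, which iterates to Q_E' = sum_(m <= k) Q_E (Delta Q_E)^m.
   Summing all entries, and using that Delta is supported on I x I, gives the
   formula. *)

Lemma cardsU_disjoint (T : finType) (A B : {set T}) :
  [disjoint A & B] -> #|A :|: B| = (#|A| + #|B|)%N.
Proof. by move=> dAB; rewrite cardsU (disjoint_setI0 dAB) cards0 subn0. Qed.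

Section ExteriorProduct.
Variables (F : fieldType) (k : nat).
Local Notation ext := {ffun {set 'I_k} -> F}.
Implicit Types (x y z : ext) (A B C D : {set 'I_k}).

Lemma wedgeE x y C : wedge x y C = \sum_(A : {set 'I_k}) \sum_(B : {set 'I_k})
  (if [disjoint A & B] && (A :|: B == C) then ext_sign F A B * x A * y B else 0).
Proof. by rewrite ffunE; apply: eq_bigr => A _; rewrite big_mkcond. Qed.

Lemma wedgeDl : left_distributive (@wedge F k) +%R.
Proof.
move=> x y z; apply/ffunP => C; rewrite !ffunE -big_split; apply: eq_bigr => A _.
by rewrite -big_split; apply: eq_bigr => B _ /=; rewrite !ffunE mulrDr mulrDl.
Qed.

Lemma wedgeDr : right_distributive (@wedge F k) +%R.
Proof.
move=> x y z; apply/ffunP => C; rewrite !ffunE -big_split; apply: eq_bigr => A _.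
by rewrite -big_split; apply: eq_bigr => B _ /=; rewrite !ffunE mulrDr.
Qed.

Lemma ext_sign_set0l B : ext_sign F set0 B = 1.
Proof.
rewrite /ext_sign (_ : [set _ | _] = set0) ?cards0 //.
by apply/setP => p; rewrite !inE.
Qed.

Lemma ext_sign_set0r A : ext_sign F A set0 = 1.
Proof.
rewrite /ext_sign (_ : [set _ | _] = set0) ?cards0 //.
by apply/setP => p; rewrite !inE andbF.
Qed.

Lemma wedge1l : left_id (ext1 F k) (@wedge F k).
Proof.
move=> x; apply/ffunP => C; rewrite wedgeE (big_only1 set0) // => [|A nA _].
  rewrite (big_only1 C) // => [|B nB _]; last by rewrite set0U (negbTE nB) andbF.
  by rewrite set0U eqxx -setI_eq0 set0I eqxx ext_sign_set0l ffunE eqxx !mul1r.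
by apply: big1 => B _; rewrite ffunE (negbTE nA) mulr0 mul0r if_same.
Qed.

Lemma wedge1r : right_id (ext1 F k) (@wedge F k).
Proof.
move=> x; apply/ffunP => C; rewrite wedgeE (big_only1 C) // => [|A nA _].
  rewrite (big_only1 set0) // => [|B nB _]; last by rewrite ffunE (negbTE nB) mulr0 if_same.
  by rewrite setU0 eqxx -setI_eq0 setI0 eqxx ext_sign_set0r ffunE eqxx mulr1 mul1r.
rewrite (big_only1 set0) // => [|B nB _]; last by rewrite ffunE (negbTE nB) mulr0 if_same.
by rewrite setU0 (negbTE nA) andbF.
Qed.

Lemma ext_signUl A B C : [disjoint A & B] ->
  ext_sign F (A :|: B) C = ext_sign F A C * ext_sign F B C.
Proof.
move=> dAB; rewrite /ext_sign -exprD -cardsU_disjoint.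
  by congr (_ ^+ _); apply: eq_card => p; rewrite !inE andb_orl.
rewrite -setI_eq0; apply/eqP/setP => p; rewrite !inE.
by case pA: (p.1 \in A) => //=; rewrite (disjointFr dAB pA) andbF.
Qed.

Lemma ext_signUr A B C : [disjoint B & C] ->
  ext_sign F A (B :|: C) = ext_sign F A B * ext_sign F A C.
Proof.
move=> dBC; rewrite /ext_sign -exprD -cardsU_disjoint.
  by congr (_ ^+ _); apply: eq_card => p; rewrite !inE andb_orl andb_orr.
rewrite -setI_eq0; apply/eqP/setP => p; rewrite !inE.
by case pB: (p.2 \in B); rewrite ?(disjointFr dBC pB) ?andbF.
Qed.

Lemma wedge_scalel c x y : wedge (ext_scale c x) y = ext_scale c (wedge x y).
Proof.
apply/ffunP => C; rewrite !ffunE mulr_sumr; apply: eq_bigr => A _.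
by rewrite mulr_sumr; apply: eq_bigr => B _; rewrite !ffunE mulrCA !mulrA.
Qed.

Lemma if_mulr_sum2 (b : bool) (s t : F) (f : {set 'I_k} -> {set 'I_k} -> F) :
  (if b then s * (\sum_A \sum_B f A B) * t else 0) =
  \sum_A \sum_B (if b then s * f A B * t else 0).
Proof.
case: b; last by rewrite big1 // => A _; rewrite big1.
by rewrite mulr_sumr mulr_suml; apply: eq_bigr => A _; rewrite mulr_sumr mulr_suml.
Qed.

Lemma wedge_wedgeE x y z D : wedge (wedge x y) z D =
  \sum_(A : {set 'I_k}) \sum_(B : {set 'I_k}) \sum_(C : {set 'I_k})
   (if [&& [disjoint A & B], [disjoint A :|: B & C] & A :|: B :|: C == D]
    then ext_sign F A B * ext_sign F (A :|: B) C * x A * y B * z C else 0).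
Proof.
rewrite wedgeE.
under eq_bigr => U _ do under eq_bigr => C _ do rewrite wedgeE if_mulr_sum2.
under eq_bigr => U _ do rewrite exchange_big.
rewrite exchange_big; apply: eq_bigr => A _.
under eq_bigr => U _ do rewrite exchange_big.
rewrite exchange_big; apply: eq_bigr => B _; rewrite exchange_big.
apply: eq_bigr => C _; rewrite (big_only1 (A :|: B)) // => [|U nU _]; last first.
  by rewrite (eq_sym _ U) (negbTE nU) andbF mulr0 mul0r if_same.
rewrite eqxx andbT.
by case: [disjoint A & B]; case: ifP => // _; ring.
Qed.

Lemma wedgeE_wedge x y z D : wedge x (wedge y z) D =
  \sum_(A : {set 'I_k}) \sum_(B : {set 'I_k}) \sum_(C : {set 'I_k})
   (if [&& [disjoint B & C], [disjoint A & B :|: C] & A :|: (B :|: C) == D]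
    then ext_sign F B C * ext_sign F A (B :|: C) * x A * y B * z C else 0).
Proof.
rewrite wedgeE.
under eq_bigr => A _ do under eq_bigr => V _ do
  rewrite wedgeE -[X in if _ then X else _]mulr1 if_mulr_sum2.
apply: eq_bigr => A _; rewrite exchange_big; apply: eq_bigr => B _.
rewrite exchange_big; apply: eq_bigr => C _.
rewrite (big_only1 (B :|: C)) // => [|V nV _]; last first.
  by rewrite (eq_sym _ V) (negbTE nV) andbF mulr0 mul0r if_same.
rewrite eqxx andbT.
by case: [disjoint B & C]; case: ifP => // _; ring.
Qed.

Lemma wedgeA : associative (@wedge F k).
Proof.
move=> x y z; apply/ffunP => D; rewrite wedge_wedgeE wedgeE_wedge.
apply: eq_bigr => A _; apply: eq_bigr => B _; apply: eq_bigr => C _.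
have -> : [&& [disjoint A & B], [disjoint A :|: B & C] & A :|: B :|: C == D] =
          [&& [disjoint B & C], [disjoint A & B :|: C] & A :|: (B :|: C) == D].
  by rewrite -!setI_eq0 setIUl setIUr !setU_eq0 setUA; do 3 case: (_ :&: _ == _).
case: ifP => // /and3P[dBC dABC _].
have dAB : [disjoint A & B] := disjointWr (subsetUl B C) dABC.
by rewrite ext_signUl // ext_signUr //; ring.
Qed.
End ExteriorProduct.

Section ExteriorRing.
Variables (F : fieldType) (k : nat).

Definition exterior := {ffun {set 'I_k} -> F}.
HB.instance Definition _ := GRing.Zmodule.on exterior.
HB.instance Definition _ := GRing.Zmodule_isPzRing.Build exterior
  (@wedgeA F k) (@wedge1l F k) (@wedge1r F k) (@wedgeDl F k) (@wedgeDr F k).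

Implicit Types (x y : exterior) (A : {set 'I_k}).

Lemma exterior_mulE x y : x * y = wedge x y. Proof. by []. Qed.

Definition ext_const (c : F) : exterior := ext_scale c (ext1 F k).

Lemma ext_scaleE c x : ext_scale c x = ext_const c * x.
Proof. by rewrite exterior_mulE /ext_const wedge_scalel wedge1l. Qed.

Lemma ext_constN c : ext_const (- c) = - ext_const c.
Proof. by apply/ffunP => A; rewrite !ffunE mulNr. Qed.

Definition deg_ge (m : nat) x := forall A, (#|A| < m)%N -> x A = 0.

Lemma deg_ge_zero m : deg_ge m 0.
Proof. by move=> A _; rewrite ffunE. Qed.

Lemma deg_ge_sum m (I : Type) (r : seq I) (P : pred I) (f : I -> exterior) :
  (forall i, P i -> deg_ge m (f i)) -> deg_ge m (\sum_(i <- r | P i) f i).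
Proof.
move=> hf; elim/big_rec: _ => [|i x Pi hx]; first exact: deg_ge_zero.
by move=> A hA; rewrite ffunE hf // hx // addr0.
Qed.

Lemma deg_geM a b x y : deg_ge a x -> deg_ge b y -> deg_ge (a + b) (x * y).
Proof.
move=> hx hy C hC; rewrite exterior_mulE wedgeE big1 // => A _; rewrite big1 // => B _.
case: ifP => // /andP[dAB /eqP eC]; rewrite -eC cardsU_disjoint // in hC.
by case: (ltnP #|A| a) => hA; [rewrite hx // mulr0 mul0r | rewrite hy ?mulr0 //; lia].
Qed.

Lemma deg_ge_vec v : deg_ge 1 (vec_ext v).
Proof.
move=> A; rewrite ltnS leqn0 cards_eq0 => /eqP ->; rewrite ffunE big1 // => i.
by move/eqP/setP/(_ i); rewrite !inE eqxx.
Qed.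

Lemma deg_ge_top x : deg_ge k.+1 x -> x = 0.
Proof.
move=> hx; apply/ffunP => A; rewrite ffunE hx //.
by rewrite ltnS (leq_trans (max_card _)) // card_ord.
Qed.
End ExteriorRing.

Arguments ext_const {F k}.

Section RingIdentities.
Variable R : pzRingType.
Implicit Types a b d q x : R.

Lemma mulr_expr_swap a b m : a * (b * a) ^+ m = (a * b) ^+ m * a.
Proof.
elim: m => [|m IH]; first by rewrite !expr0 mul1r mulr1.
by rewrite exprS [in RHS]exprS -!mulrA IH.
Qed.

Lemma exprS_swap a b m : (a * b) ^+ m.+1 = a * (b * a) ^+ m * b.
Proof. by rewrite exprS -mulrA mulr_expr_swap mulrA. Qed.

Lemma geometric_inverse x m : x ^+ m = 0 ->
  (1 - x) * \sum_(i < m) x ^+ i = 1 /\ (\sum_(i < m) x ^+ i) * (1 - x) = 1.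
Proof.
move=> xm0; suff: (1 - x) * \sum_(i < m) x ^+ i = 1 - x ^+ m /\
                  (\sum_(i < m) x ^+ i) * (1 - x) = 1 - x ^+ m by rewrite xm0 subr0.
elim: m {xm0} => [|m [IHl IHr]]; first by rewrite big_ord0 expr0 mulr0 mul0r subrr.
rewrite big_ord_recr /=; split.
  by rewrite mulrDr IHl mulrBl mul1r -exprS addrA subrK.
by rewrite mulrDl IHr mulrBr mulr1 -exprSr addrA subrK.
Qed.

(* r' c - r c = r' ((1 - c a) - (1 - c a')) r c *)
Lemma resolvent (c a a' r r' : R) : (1 - c * a) * r = 1 -> r' * (1 - c * a') = 1 ->
  r' * c = r * c + r' * c * (a' - a) * (r * c).
Proof.
move=> r_inv r'_inv.
have -> : r' * c * (a' - a) * (r * c) = r' * ((1 - c * a) - (1 - c * a')) * r * c.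
  by rewrite [in RHS]opprB [in RHS]addrC addrA subrK -mulrBr !mulrA.
rewrite mulrBr r'_inv mulrBl mul1r -(mulrA r') r_inv mulr1 mulrBl.
by rewrite addrC subrK.
Qed.

Lemma resolvent_expand q x d : x = q + x * d * q ->
  forall m, x = \sum_(i < m) q * (d * q) ^+ i + x * (d * q) ^+ m.
Proof.
move=> xE; elim => [|m IH]; first by rewrite big_ord0 expr0 mulr1 add0r.
rewrite big_ord_recr /= -addrA {1}IH; congr (_ + _).
by rewrite {1}xE mulrDl exprS !mulrA.
Qed.
End RingIdentities.

Lemma sum_tupleS (T : finType) (R : nmodType) m (f : seq T -> R) :
  \sum_(t : m.+1.-tuple T) f t = \sum_(x : T) \sum_(t : m.-tuple T) f (x :: t).
Proof.
rewrite pair_big /= (reindex (fun p : T * m.-tuple T => [tuple of p.1 :: p.2])) //=.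
exists (fun t : m.+1.-tuple T => (thead t, [tuple of behead t])).
  by move=> [x t] _ /=; rewrite theadE; congr pair; apply: val_inj.
by move=> t _ /=; rewrite [RHS]tuple_eta.
Qed.
Arguments sum_tupleS {T R m}.

Section SquareMatrices.
Variables (R : pzRingType) (n : nat).
Implicit Types M N P : 'M[R]_n.

Lemma mxmulE M N i j : (M * N) i j = \sum_l M i l * N l j.
Proof. by rewrite -mulmxE mxE. Qed.

Lemma sum_entries_mulmx3 M N P : \sum_i \sum_j (M * N * P) i j =
  \sum_a \sum_b (\sum_i M i a) * N a b * (\sum_j P b j).
Proof.
under eq_bigr => i _ do under eq_bigr => j _ do rewrite mxmulE.
under eq_bigr => i _ do under eq_bigr => j _ do under eq_bigr => b _ do
  rewrite mxmulE mulr_suml.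
under [RHS]eq_bigr => a _ do under eq_bigr => b _ do rewrite mulr_suml mulr_suml.
under [RHS]eq_bigr => a _ do under eq_bigr => b _ do under eq_bigr => i _ do
  rewrite mulr_sumr.
under eq_bigr => i _ do under eq_bigr => j _ do rewrite exchange_big.
under eq_bigr => i _ do rewrite exchange_big.
under eq_bigr => i _ do under eq_bigr => a _ do rewrite exchange_big.
by rewrite exchange_big; under eq_bigr => a _ do rewrite exchange_big.
Qed.
End SquareMatrices.

Section MatrixFiltration.
Variables (F : fieldType) (k n : nat).
Local Notation L := (exterior F k).

Definition mx_deg_ge m (M : 'M[L]_n) := forall i j, deg_ge m (M i j).

Lemma mx_deg_ge0 M : mx_deg_ge 0 M. Proof. by []. Qed.

Lemma mx_deg_geM a b M N : mx_deg_ge a M -> mx_deg_ge b N -> mx_deg_ge (a + b) (M * N).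
Proof. by move=> hM hN i j; rewrite mxmulE; apply: deg_ge_sum => l _; apply: deg_geM. Qed.

Lemma mx_deg_geX m M : mx_deg_ge 1 M -> mx_deg_ge m (M ^+ m).
Proof.
move=> hM; elim: m => [|m IH]; first exact: mx_deg_ge0.
by rewrite exprS; apply: mx_deg_geM hM IH.
Qed.

Lemma mx_deg_ge_top M : mx_deg_ge k.+1 M -> M = 0.
Proof. by move=> hM; apply/matrixP => i j; rewrite mxE; apply: deg_ge_top. Qed.
End MatrixFiltration.

Section WalkMatrices.
Variables (F : fieldType) (k n : nat).
Variables (chi : 'I_n -> 'rV[F]_k) (y : 'I_n -> 'I_n -> F).
Local Notation L := (exterior F k).
Local Notation chiv i := (vec_ext (chi i) : L).

Lemma wext_auxMl (a b : L) p r : wext_aux chi y (a * b) p r = a * wext_aux chi y b p r.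
Proof. by elim: r a b p => [|v r IH] a b p //=; rewrite -exterior_mulE -mulrA IH. Qed.

Lemma walk_extensor_cons x v r : walk_extensor chi y [:: x, v & r] =
  chiv x * (ext_const (y x v) * walk_extensor chi y (v :: r)).
Proof. by rewrite /= -exterior_mulE wext_auxMl ext_scaleE wext_auxMl. Qed.

Definition chi_mx : 'M[L]_n := \matrix_(i, j) (if i == j then chiv i else 0).

Definition adj_mx (E : {set 'I_n * 'I_n}) : 'M[L]_n :=
  \matrix_(i, j) (if (i, j) \in E then ext_const (y i j) else 0).

Definition walks_between (E : {set 'I_n * 'I_n}) l i j : L :=
  \sum_(t : l.+1.-tuple 'I_n | is_walk E t && ((head i t == i) && (last i t == j)))
     walk_extensor chi y t.

Definition walk_term (E : {set 'I_n * 'I_n}) i j x (r : seq 'I_n) : L :=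
  if is_walk E (x :: r) && ((x == i) && (last x r == j))
  then walk_extensor chi y (x :: r) else 0.

Lemma walks_betweenE E l i j :
  walks_between E l i j = \sum_x \sum_(r : l.-tuple 'I_n) walk_term E i j x r.
Proof.
by rewrite /walks_between big_mkcond (sum_tupleS (fun s : seq 'I_n =>
  if is_walk E s && ((head i s == i) && (last i s == j))
  then walk_extensor chi y s else 0)).
Qed.

Lemma walks_between0 E i j : walks_between E 0 i j = if i == j then chiv i else 0.
Proof.
rewrite walks_betweenE (big_only1 i) // => [|x nx _]; last first.
  by apply: big1 => r _; rewrite /walk_term (negbTE nx) andbF.
rewrite (big_only1 [tuple]) => [|//|r]; last by rewrite tuple0 eqxx.
by rewrite /walk_term /= eqxx eq_sym; case: eqP => // ->.
Qed.

Lemma walks_betweenS E l i j : walks_between E l.+1 i j =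
  chiv i * \sum_v (adj_mx E i v * walks_between E l v j).
Proof.
rewrite walks_betweenE (big_only1 i) // => [|x nx _]; last first.
  by apply: big1 => r _; rewrite /walk_term (negbTE nx) andbF.
rewrite sum_tupleS mulr_sumr; apply: eq_bigr => v _.
rewrite walks_betweenE (big_only1 v) // => [|x nx _]; last first.
  by apply: big1 => r _; rewrite /walk_term (negbTE nx) andbF.
rewrite !mulr_sumr; apply: eq_bigr => r _.
rewrite /walk_term walk_extensor_cons mxE !eqxx /=.
case: ((i, v) \in E); last by rewrite mul0r mulr0.
by case: ifP; rewrite ?mulr0 // mulrA.
Qed.

Lemma walks_between_mx E l i j :
  walks_between E l i j = ((chi_mx * adj_mx E) ^+ l * chi_mx) i j.
Proof.
elim: l i j => [|l IH] i j; first by rewrite expr0 mul1r walks_between0 mxE.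
rewrite walks_betweenS exprS -!mulrA mxmulE [RHS](big_only1 i) // => [|u nu _]; last first.
  by rewrite mxE eq_sym (negbTE nu) mul0r.
by rewrite mxE eqxx mxmulE; congr (_ * _); apply: eq_bigr => v _; rewrite IH.
Qed.
End WalkMatrices.

Section PathMatrix.
Variables (F : fieldType) (k n : nat).
Variables (chi : 'I_n -> 'rV[F]_k) (y : 'I_n -> 'I_n -> F).
Local Notation L := (exterior F k).
Local Notation C := (chi_mx chi).
Local Notation A := (@adj_mx F k n y).

Definition Qmx (E : {set 'I_n * 'I_n}) : 'M[L]_n := \sum_(l < k) (C * A E) ^+ l * C.

Lemma Qmat_Qmx E i j : Qmat chi y E i j = Qmx E i j.
Proof. by rewrite summxE; apply: eq_bigr => l _; rewrite -walks_between_mx. Qed.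

Lemma Fvec_Qmx E j : Fvec chi y E j = \sum_i Qmx E i j.
Proof. by apply: eq_bigr => i _; rewrite Qmat_Qmx. Qed.

Lemma Svec_Qmx E i : Svec chi y E i = \sum_j Qmx E i j.
Proof. by apply: eq_bigr => j _; rewrite Qmat_Qmx. Qed.

Lemma mx_deg_ge_chi : mx_deg_ge 1 C.
Proof. by move=> i j; rewrite mxE; case: eqP => _; [apply: deg_ge_vec | apply: deg_ge_zero]. Qed.

Lemma mx_deg_ge_CA E : mx_deg_ge 1 (C * A E).
Proof. by rewrite -[1%N]addn0; apply: mx_deg_geM mx_deg_ge_chi (mx_deg_ge0 _). Qed.

Lemma mx_deg_ge_Qmx E : mx_deg_ge 1 (Qmx E).
Proof.
move=> i j; rewrite summxE; apply: deg_ge_sum => l _; rewrite -[1%N]add0n.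
exact: (mx_deg_geM (mx_deg_ge0 _) mx_deg_ge_chi).
Qed.

Lemma CA_nilpotent E : (C * A E) ^+ k.+1 = 0.
Proof. exact/mx_deg_ge_top/mx_deg_geX/mx_deg_ge_CA. Qed.

Lemma Qmx_geometric E : Qmx E = (\sum_(l < k.+1) (C * A E) ^+ l) * C.
Proof.
rewrite mulr_suml big_ord_recr /=; suff -> : (C * A E) ^+ k * C = 0 by rewrite addr0.
apply: mx_deg_ge_top; rewrite -addn1.
by apply: mx_deg_geM mx_deg_ge_chi; apply: mx_deg_geX (mx_deg_ge_CA E).
Qed.

Lemma Qmx_resolvent E E' : Qmx E' = Qmx E + Qmx E' * (A E' - A E) * Qmx E.
Proof.
rewrite !Qmx_geometric; apply: resolvent.
  exact: (geometric_inverse (CA_nilpotent E)).1.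
exact: (geometric_inverse (CA_nilpotent E')).2.
Qed.

Lemma Zall_Ztot E : Zall chi y E = Ztot chi y E.
Proof.
rewrite /Ztot /Qmat /walk_sum.
under eq_bigr => i _ do rewrite exchange_big.
rewrite exchange_big; apply: eq_bigr => l _.
rewrite big_mkcond (sum_tupleS (fun s : seq 'I_n =>
  if is_walk E s && true then walk_extensor chi y s : L else 0)).
under [RHS]eq_bigr => i _ do under eq_bigr => j _ do
  rewrite -/(walks_between chi y E l i j) walks_betweenE.
under [RHS]eq_bigr => i _ do rewrite exchange_big.
rewrite [RHS]exchange_big; apply: eq_bigr => x _.
under [RHS]eq_bigr => i _ do rewrite exchange_big.
rewrite [RHS]exchange_big; apply: eq_bigr => r _.
rewrite (big_only1 x) // => [|i ni _]; last first.
  by apply: big1 => j _; rewrite /walk_term eq_sym (negbTE ni) andbF.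
rewrite (big_only1 (last x r)) // => [|j nj _]; last first.
  by rewrite /walk_term eq_sym (negbTE nj) !andbF.
by rewrite /walk_term !eqxx.
Qed.
End PathMatrix.

Section EdgeUpdate.
Variables (F : fieldType) (k n : nat).
Variables (chi : 'I_n -> 'rV[F]_k) (y : 'I_n -> 'I_n -> F).
Variables (E Ep Em : {set 'I_n * 'I_n}).
Hypotheses (hEp : [disjoint Ep & E]) (hEm : Em \subset E).
Local Notation L := (exterior F k).
Local Notation A := (@adj_mx F k n y).
Local Notation Q := (Qmx chi y E).
Local Notation I := (endpoints Ep Em).
Local Notation E' := ((E :\: Em) :|: Ep).

Definition Delta_mx : 'M[L]_n := \matrix_(i, j) Delta k y Ep Em i j.

Lemma adj_mx_update : A E' - A E = Delta_mx.
Proof.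
apply/matrixP => i j; rewrite !mxE /Delta !inE.
case ijEp: ((i, j) \in Ep); first by rewrite (disjointFr hEp ijEp) orbT subr0.
case ijEm: ((i, j) \in Em); first by rewrite (subsetP hEm _ ijEm) /= sub0r -ext_constN.
by rewrite /= orbF; case: ((i, j) \in E); rewrite subrr.
Qed.

Lemma Delta_out i j : (i \notin I) || (j \notin I) -> Delta k y Ep Em i j = 0.
Proof.
apply: contraTeq => ij_upd; rewrite negb_or !negbK.
have ijU : (i, j) \in Ep :|: Em.
  by move: ij_upd; rewrite /Delta inE; case: ifP => //; case: ifP => //; rewrite eqxx.
by rewrite !inE; apply/andP; split; apply/existsP; [exists j | exists i]; rewrite ijU ?orbT.
Qed.

Lemma Delta_mx_mull_out (M : 'M[L]_n) a b : a \notin I -> (Delta_mx * M) a b = 0.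
Proof.
by move=> aI; rewrite mxmulE big1 // => l _; rewrite mxE Delta_out ?aI ?mul0r.
Qed.

Lemma Delta_mx_mulr_out (M : 'M[L]_n) a b : b \notin I -> (M * Delta_mx) a b = 0.
Proof.
by move=> bI; rewrite mxmulE big1 // => l _; rewrite mxE Delta_out ?bI ?orbT ?mulr0.
Qed.

Lemma DQpow_mx m a b : DQpow chi y E Ep Em m a b = (Delta_mx * (Q * Delta_mx) ^+ m) a b.
Proof.
have QD l j : mmul I (Qmat chi y E) (Delta k y Ep Em) l j = (Q * Delta_mx) l j.
  rewrite /mmul big_rmcond => [|x xI]; last by rewrite Delta_out ?xI // -exterior_mulE mulr0.
  by rewrite mxmulE; apply: eq_bigr => x _; rewrite Qmat_Qmx mxE.
elim: m a b => [|m IH] a b; first by rewrite expr0 mulr1 mxE.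
rewrite /= -/(DQpow chi y E Ep Em m) {1}/mmul big_rmcond => [|l lI]; last first.
  by rewrite IH mulr_expr_swap Delta_mx_mulr_out // -exterior_mulE mul0r.
rewrite exprSr mulrA mxmulE; apply: eq_bigr => l _.
by rewrite IH QD -exterior_mulE.
Qed.

Lemma correction_termE m : correction_term chi y E Ep Em m =
  \sum_i \sum_j (Q * (Delta_mx * Q) ^+ m.+1) i j.
Proof.
rewrite exprS_swap mulrA sum_entries_mulmx3 /correction_term.
rewrite big_rmcond => [|a aI]; last first.
  by apply: big1 => b _; rewrite DQpow_mx Delta_mx_mull_out // -!exterior_mulE mulr0 mul0r.
apply: eq_bigr => a _; rewrite big_rmcond => [|b bI]; last first.
  by rewrite DQpow_mx mulr_expr_swap Delta_mx_mulr_out // -!exterior_mulE mulr0 mul0r.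
by apply: eq_bigr => b _; rewrite DQpow_mx -!exterior_mulE Fvec_Qmx Svec_Qmx.
Qed.

Lemma Qmx_update : Qmx chi y E' = \sum_(m < k.+1) Q * (Delta_mx * Q) ^+ m.
Proof.
have := Qmx_resolvent chi y E E'; rewrite adj_mx_update => /resolvent_expand/(_ k.+1) ->.
suff -> : Qmx chi y E' * (Delta_mx * Q) ^+ k.+1 = 0 by rewrite addr0.
apply/mx_deg_ge_top/(mx_deg_geM (mx_deg_ge0 _))/mx_deg_geX.
by rewrite -[1%N]add0n; apply: mx_deg_geM (mx_deg_ge0 _) (mx_deg_ge_Qmx chi y E).
Qed.
End EdgeUpdate.

Theorem mainTheorem9 (F : fieldType) (k n : nat) (hk : (1 <= k)%N)
  (chi : 'I_n -> 'rV[F]_k) (y : 'I_n -> 'I_n -> F)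
  (E Ep Em : {set 'I_n * 'I_n})
  (hEp : [disjoint Ep & E]) (hEm : Em \subset E) :
  Zall chi y ((E :\: Em) :|: Ep) =
  Ztot chi y E +
  \sum_(i < k) correction_term chi y E Ep Em i.
Proof.
rewrite Zall_Ztot /Ztot.
under eq_bigr => i _ do under eq_bigr => j _ do
  rewrite Qmat_Qmx (Qmx_update chi y hEp hEm) summxE.
under eq_bigr => i _ do rewrite exchange_big.
rewrite exchange_big big_ord_recl; congr (_ + _).
  by apply: eq_bigr => i _; apply: eq_bigr => j _; rewrite expr0 mulr1 Qmat_Qmx.
by apply: eq_bigr => m _; rewrite correction_termE.
Qed.
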